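(* Let $N, M \in \mathbb{Z}^{+}$. Let $(\mathbf{a},\mathbf{b})$ be a Golay complementary pair of length $N$ and let $(\mathbf{c},\mathbf{d})$ be a Golay complementary pair of length $M$, all with complex entries. Let $\xi_1,\xi_2 \in \mathbb{C}$ with $|\xi_1| = |\xi_2| = 1$, and let $k, l, m \in \mathbb{Z}$. Define the sequences $\mathbf{f}$ and $\mathbf{g}$ through their polynomial representations $$p_{\mathbf{f}}(z) = \xi_1\, p_{\mathbf{a}}(z^k)\, p_{\mathbf{c}}(z^l) + \xi_2\, p_{\mathbf{b}}(z^k)\, p_{\mathbf{d}}(z^l)\, z^{m},$$ $$p_{\mathbf{g}}(z) = \xi_1\, p_{\mathbf{a}}(z^k)\, p_{\tilde{\mathbf{d}}}(z^l) - \xi_2\, p_{\mathbf{b}}(z^k)\, p_{\tilde{\mathbf{c}}}(z^l)\, z^{m}.$$ Then $(\mathbf{f},\mathbf{g})$ is a Golay complementary pair.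
   Context: For a sequence $\mathbf{a} = (a_0, a_1, \dots, a_{N-1})$ of complex numbers, its polynomial representation is $p_{\mathbf{a}}(z) = a_{N-1}z^{N-1} + \dots + a_1 z + a_0$ for $z \in \mathbb{C}$ (nonzero when negative powers occur). More generally, a finitely supported complex sequence $(x_i)_{i\in\mathbb{Z}}$ is identified with the Laurent polynomial $p_{\mathbf{x}}(z)=\sum_i x_i z^i$; when $k,l,m$ may be negative, $\mathbf{f}$ and $\mathbf{g}$ denote the (finitely supported, $\mathbb{Z}$-indexed) coefficient sequences of the Laurent polynomials above. For a sequence $\mathbf{a}=(a_0,\dots,a_{N-1})$, $\tilde{\mathbf{a}} = (a_{N-1}^*, a_{N-2}^*, \dots, a_0^* )$ denotes the sequence reversed in order and element-wise complex conjugated. The aperiodic autocorrelation of a finitely supported sequence $\mathbf{x}$ is $\rho_{\mathbf{x}}(j) = \sum_{i} x_i^* x_{i+j}$ for $j\in\mathbb{Z}$ (for a sequence of length $N$ indexed $0,\dots,N-1$ this is $\sum_{i=0}^{N-j-1} a_i^* a_{i+j}$ for $0\le j\le N-1$, $\rho_{\mathbf{a}}(-j)=\rho_{\mathbf{a}}(j)^*$, and $0$ otherwise). A pair of sequences $(\mathbf{x},\mathbf{y})$ is a Golay complementary pair if $\rho_{\mathbf{x}}(j) + \rho_{\mathbf{y}}(j) = 0$ for all $j \neq 0$; equivalently, $|p_{\mathbf{x}}(z)|^2 + |p_{\mathbf{y}}(z)|^2$ is constant for all $z$ on the unit circle. A Golay complementary pair ''of length $N$'' consists of two sequences each of length $N$.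 *)

(* Complex numbers are modelled as R[i] = complex R for an
   arbitrary real closed field R (R = the reals gives C). *)
From HB Require Import structures.
From mathcomp Require Import all_boot all_order all_algebra.
From mathcomp Require Export complex.
Set Implicit Arguments. Unset Strict Implicit. Unset Printing Implicit Defensive.
Import Order.TTheory GRing.Theory Num.Theory.
Local Open Scope ring_scope.

Section Laurent.
Variable C : numClosedFieldType.

(* A Laurent polynomial sum_t c_t z^(e_t) is represented by a finite list of
   monomials (c, e); its coefficient sequence x : int -> C is finitely
   supported. *)
Definition lpoly := seq (C * int).

Definition lcoef (p : lpoly) (i : int) : C := \sum_(t <- p | t.2 == i) t.1.

Definition lsupp (p : lpoly) : seq int := undup [seq t.2 | t <- p].

Definition ladd (p q : lpoly) : lpoly := p ++ q.
Definition lscale (c : C) (p : lpoly) : lpoly := [seq (c * t.1, t.2) | t <- p].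
Definition lmul (p q : lpoly) : lpoly :=
  [seq (t.1 * u.1, t.2 + u.2) | t <- p, u <- q].
Definition lmono (m : int) : lpoly := [:: (1, m)].
Definition lsubst (k : int) (p : lpoly) : lpoly := [seq (t.1, t.2 * k) | t <- p].

Definition pseq (N : nat) (a : 'I_N -> C) : lpoly :=
  [seq (a i, (i : nat)%:Z) | i <- enum 'I_N].

Definition tilde (N : nat) (a : 'I_N -> C) : 'I_N -> C :=
  fun i => (a (rev_ord i))^*.

(* aperiodic autocorrelation rho_x(j) = sum_i x_i^* x_{i+j} (sum over the
   support of x, outside of which the summand vanishes) *)
Definition acorr (p : lpoly) (j : int) : C :=
  \sum_(i <- lsupp p) (lcoef p i)^* * lcoef p (i + j).

Definition golay_pair (x y : lpoly) : Prop :=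
  forall j : int, j != 0 -> acorr x j + acorr y j = 0.

End Laurent.

(* Pair two Laurent polynomials through an arbitrary weight F : int -> C,
   [lcorr P Q F = sum_(s,t) p_s^* q_t F (t - s)]; the autocorrelation at j is
   the pairing with the indicator of j.  Thus (P, Q) is a Golay pair iff
   [lcorr P P F + lcorr Q Q F = K * F 0] for all F and some constant K, and in
   this form complementarity survives z |-> z^k, while multiplying both
   members by a common factor A turns the right-hand side into
   [K * lcorr A A F].  In [lcorr f f + lcorr g g] the cross terms cancel, since
   reversing and conjugating swaps the roles of c and d, and as
   |xi1| = |xi2| = 1 the diagonal terms add up to
   [K_cd * (lcorr A A F + lcorr B B F) = K_cd * K_ab * F 0]. *)
From HB Require Import structures.
From mathcomp Require Import all_boot all_order all_algebra.
From mathcomp Require Import complex.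
From mathcomp Require Import ring zify.
Import Order.TTheory GRing.Theory Num.Theory.
Set Implicit Arguments. Unset Strict Implicit.
Local Open Scope ring_scope.

Section Correlation.
Variable C : numClosedFieldType.
Implicit Types (P Q A B : lpoly C) (F G : int -> C).

Definition lcorr P Q F : C :=
  \sum_(t <- P) \sum_(u <- Q) t.1^* * u.1 * F (u.2 - t.2).

Definition indic (j : int) : int -> C := fun e => (e == j)%:R.

Lemma eq_lcorr P Q F G : F =1 G -> lcorr P Q F = lcorr P Q G.
Proof. by move=> eFG; apply: eq_bigr => t _; apply: eq_bigr => u _; rewrite eFG. Qed.

Lemma lcorr_addl P1 P2 Q F : lcorr (ladd P1 P2) Q F = lcorr P1 Q F + lcorr P2 Q F.
Proof. by rewrite /lcorr /ladd big_cat. Qed.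

Lemma lcorr_addr P Q1 Q2 F : lcorr P (ladd Q1 Q2) F = lcorr P Q1 F + lcorr P Q2 F.
Proof. by rewrite /lcorr -big_split; apply: eq_bigr => t _; rewrite big_cat. Qed.

Lemma lcorr_scalel x P Q F : lcorr (lscale x P) Q F = x^* * lcorr P Q F.
Proof.
rewrite /lcorr big_map mulr_sumr; apply: eq_bigr => t _.
by rewrite mulr_sumr; apply: eq_bigr => u _ /=; rewrite rmorphM !mulrA.
Qed.

Lemma lcorr_scaler x P Q F : lcorr P (lscale x Q) F = x * lcorr P Q F.
Proof.
rewrite /lcorr mulr_sumr; apply: eq_bigr => t _.
by rewrite big_map mulr_sumr; apply: eq_bigr => u _ /=; rewrite mulrCA !mulrA.
Qed.

Lemma lcorrD P Q F G :
  lcorr P Q (fun e => F e + G e) = lcorr P Q F + lcorr P Q G.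
Proof.
rewrite /lcorr -big_split; apply: eq_bigr => t _.
by rewrite -big_split; apply: eq_bigr => u _ /=; rewrite mulrDr.
Qed.

Lemma lcorrMr P Q F c : lcorr P Q (fun e => F e * c) = lcorr P Q F * c.
Proof.
rewrite /lcorr mulr_suml; apply: eq_bigr => t _.
by rewrite mulr_suml; apply: eq_bigr => u _ /=; rewrite mulrA.
Qed.

Lemma lcorr_mul A P B Q F :
  lcorr (lmul A P) (lmul B Q) F =
  lcorr A B (fun e => lcorr P Q (fun e' => F (e + e'))).
Proof.
rewrite /lcorr /lmul big_allpairs_dep; apply: eq_bigr => t1 _.
under eq_bigr do rewrite big_allpairs_dep.
rewrite exchange_big; apply: eq_bigr => u1 _ /=.
rewrite mulr_sumr; apply: eq_bigr => t2 _.
rewrite mulr_sumr; apply: eq_bigr => u2 _ /=.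
rewrite rmorphM addrACA opprD.
ring.
Qed.

Lemma lcorr_monol P Q m F :
  lcorr (lmul P (lmono C m)) Q F = lcorr P Q (fun e => F (e - m)).
Proof.
rewrite /lcorr /lmul big_allpairs_dep; apply: eq_bigr => t _.
rewrite big_seq1; apply: eq_bigr => u _ /=.
by rewrite mulr1 opprD addrA.
Qed.

Lemma lcorr_monor P Q m F :
  lcorr P (lmul Q (lmono C m)) F = lcorr P Q (fun e => F (e + m)).
Proof.
rewrite /lcorr; apply: eq_bigr => t _.
rewrite /lmul big_allpairs_dep; apply: eq_bigr => u _.
by rewrite big_seq1 /= mulr1 addrAC.
Qed.

Lemma lcorr_mono P Q m F :
  lcorr (lmul P (lmono C m)) (lmul Q (lmono C m)) F = lcorr P Q F.
Proof. by rewrite lcorr_monol lcorr_monor; apply: eq_lcorr => e; rewrite addrK. Qed.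

Lemma lcorr_mul_congr A B P Q P' Q' F :
  (forall G, lcorr P Q G = lcorr P' Q' G) ->
  lcorr (lmul A P) (lmul B Q) F = lcorr (lmul A P') (lmul B Q') F.
Proof. by move=> ePQ; rewrite !lcorr_mul; apply: eq_lcorr => e; rewrite ePQ. Qed.

Lemma lcorr_subst k P Q F :
  lcorr (lsubst k P) (lsubst k Q) F = lcorr P Q (fun e => F (e * k)).
Proof.
rewrite /lcorr big_map; apply: eq_bigr => t _.
by rewrite big_map; apply: eq_bigr => u _ /=; rewrite mulrBl.
Qed.

Lemma lcorr_pseq N (a b : 'I_N -> C) F :
  lcorr (pseq a) (pseq b) F =
  \sum_(i < N) \sum_(j < N) (a i)^* * b j * F (j%:Z - i%:Z).
Proof.
rewrite /lcorr big_map big_enum /=; apply: eq_bigr => i _.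
by rewrite big_map big_enum.
Qed.

Lemma lcorr_pseq_tilde N (a b : 'I_N -> C) F :
  lcorr (pseq (tilde a)) (pseq (tilde b)) F = lcorr (pseq b) (pseq a) F.
Proof.
rewrite !lcorr_pseq exchange_big /=.
rewrite (reindex_inj rev_ord_inj) /=; apply: eq_bigr => i _.
rewrite (reindex_inj rev_ord_inj) /=; apply: eq_bigr => j _.
rewrite /tilde conjCK !rev_ordK [a j * _]mulrC.
have ltiN := ltn_ord i; have ltjN := ltn_ord j.
by congr (_ * F _); lia.
Qed.

Lemma lcorr_subst_tilde k N (a b : 'I_N -> C) F :
  lcorr (lsubst k (pseq a)) (lsubst k (pseq b)) F =
  lcorr (lsubst k (pseq (tilde b))) (lsubst k (pseq (tilde a))) F.
Proof. by rewrite !lcorr_subst lcorr_pseq_tilde. Qed.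

Lemma acorrE P j : acorr P j = lcorr P P (indic j).
Proof.
rewrite /acorr /lcorr /lcoef /indic.
under eq_bigr => i _ do rewrite rmorph_sum big_distrl big_mkcond /=.
rewrite exchange_big /=; apply: eq_big_seq => t tP.
have tPsupp : t.2 \in lsupp P by rewrite mem_undup; apply: map_f.
rewrite (bigD1_seq t.2) ?undup_uniq //= eqxx.
rewrite [X in _ + X]big1 ?addr0; last by move=> i; rewrite eq_sym => /negbTE->.
rewrite big_distrr /= big_mkcond /=; apply: eq_bigr => u _.
by rewrite subr_eq addrC; case: eqP; rewrite ?mulr1 ?mulr0.
Qed.

Definition ldiffs P : seq int := [seq u.2 - t.2 | t <- P, u <- P].

Lemma lcorr_decomp (s : seq int) P F : uniq s -> {subset ldiffs P <= s} ->
  lcorr P P F = \sum_(e <- s) F e * acorr P e.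
Proof.
move=> s_uniq sP; rewrite /lcorr; symmetry.
under eq_bigr do rewrite acorrE mulr_sumr.
rewrite exchange_big; apply: eq_big_seq => t tP.
under eq_bigr do rewrite mulr_sumr.
rewrite exchange_big; apply: eq_big_seq => u uP.
have uts : u.2 - t.2 \in s by apply/sP/(allpairs_f (fun t u => u.2 - t.2)).
rewrite (bigD1_seq (u.2 - t.2)) //= /indic eqxx mulr1 mulrC.
by rewrite big1 ?addr0 // => e; rewrite eq_sym => /negbTE->; rewrite !mulr0.
Qed.

Definition golay_form P Q (K : C) : Prop :=
  forall F, lcorr P P F + lcorr Q Q F = F 0 * K.

Lemma golay_pair_form P Q :
  golay_pair P Q -> golay_form P Q (acorr P 0 + acorr Q 0).
Proof.
move=> PQ F; set s := undup (0 :: ldiffs P ++ ldiffs Q).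
have s_uniq : uniq s by rewrite undup_uniq.
have sP : {subset ldiffs P <= s} by move=> e eP; rewrite mem_undup !inE mem_cat eP orbT.
have sQ : {subset ldiffs Q <= s}.
  by move=> e eQ; rewrite mem_undup !inE mem_cat eQ !orbT.
rewrite (lcorr_decomp F s_uniq sP) (lcorr_decomp F s_uniq sQ) -big_split /=.
rewrite (bigD1_seq 0) //= ?mem_undup ?mem_head // -mulrDr big1 ?addr0 // => e e_neq0.
by rewrite -mulrDr PQ ?mulr0.
Qed.

Lemma golay_form_pair P Q K : golay_form P Q K -> golay_pair P Q.
Proof. by move=> PQ j j_neq0; rewrite !acorrE PQ /indic eq_sym (negbTE j_neq0) mul0r. Qed.

Lemma golay_formC P Q K : golay_form P Q K -> golay_form Q P K.
Proof. by move=> PQ F; rewrite addrC. Qed.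

Lemma golay_form_tilder N (a b : 'I_N -> C) K :
  golay_form (pseq a) (pseq b) K -> golay_form (pseq a) (pseq (tilde b)) K.
Proof. by move=> ab F; rewrite lcorr_pseq_tilde. Qed.

Lemma golay_form_subst k P Q K :
  golay_form P Q K -> golay_form (lsubst k P) (lsubst k Q) K.
Proof. by move=> PQ F; rewrite !lcorr_subst PQ mul0r. Qed.

Lemma golay_form_mull A P Q K F : golay_form P Q K ->
  lcorr (lmul A P) (lmul A P) F + lcorr (lmul A Q) (lmul A Q) F = K * lcorr A A F.
Proof.
move=> PQ; rewrite !lcorr_mul -lcorrD mulrC -lcorrMr.
by apply: eq_lcorr => e; rewrite PQ addr0.
Qed.

End Correlation.

Theorem theorem1 (R : rcfType) (N M : nat) (hN : (0 < N)%N) (hM : (0 < M)%N)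
  (a b : 'I_N -> R[i]) (c d : 'I_M -> R[i])
  (hab : golay_pair (pseq a) (pseq b))
  (hcd : golay_pair (pseq c) (pseq d))
  (xi1 xi2 : R[i]) (h1 : `|xi1| = 1) (h2 : `|xi2| = 1)
  (k l m : int) :
  let f := ladd (lscale xi1 (lmul (lsubst k (pseq a)) (lsubst l (pseq c))))
                (lscale xi2 (lmul (lmul (lsubst k (pseq b)) (lsubst l (pseq d)))
                                  (lmono _ m))) in
  let g := ladd (lscale xi1 (lmul (lsubst k (pseq a)) (lsubst l (pseq (tilde d)))))
                (lscale (- xi2) (lmul (lmul (lsubst k (pseq b))
                                            (lsubst l (pseq (tilde c))))
                                      (lmono _ m))) in
  golay_pair f g.
Proof.
move=> f g.
have [ab cd] := (golay_pair_form hab, golay_pair_form hcd).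
apply: (golay_form_pair (K := (acorr (pseq c) 0 + acorr (pseq d) 0)
                             * (acorr (pseq a) 0 + acorr (pseq b) 0))) => F.
rewrite {}/f {}/g.
set A := lsubst k (pseq a); set B := lsubst k (pseq b); set Z := lmono _ m.
set Lc := lsubst l (pseq c); set Ld := lsubst l (pseq d).
set Lc' := lsubst l (pseq (tilde c)); set Ld' := lsubst l (pseq (tilde d)).
have cross_fg : lcorr (lmul A Lc) (lmul (lmul B Ld) Z) F
              = lcorr (lmul A Ld') (lmul (lmul B Lc') Z) F.
  by rewrite !lcorr_monor; apply/lcorr_mul_congr/lcorr_subst_tilde.
have cross_gf : lcorr (lmul (lmul B Ld) Z) (lmul A Lc) F
              = lcorr (lmul (lmul B Lc') Z) (lmul A Ld') F.
  by rewrite !lcorr_monol; apply/lcorr_mul_congr/lcorr_subst_tilde.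
rewrite !lcorr_addl !lcorr_addr !lcorr_scalel !lcorr_scaler rmorphN !lcorr_mono.
rewrite cross_fg cross_gf.
(* The cross terms occur with opposite signs in f and g. *)
transitivity (xi1^* * xi1 * (lcorr (lmul A Lc) (lmul A Lc) F + lcorr (lmul A Ld') (lmul A Ld') F)
  + xi2^* * xi2 * (lcorr (lmul B Ld) (lmul B Ld) F + lcorr (lmul B Lc') (lmul B Lc') F)).
  by ring.
have cd' := golay_form_subst l (golay_form_tilder cd).
have dc' := golay_form_subst l (golay_form_tilder (golay_formC cd)).
rewrite -!normCKC h1 h2 expr1n !mul1r (golay_form_mull _ _ cd') (golay_form_mull _ _ dc').
by rewrite -mulrDr (golay_form_subst k ab) mulrCA.
Qed.
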